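(* Let $J\ge2$, positive integers $n_1,\dots,n_J$ with $n_l\ge 2$ and $n=\sum_l n_l$, and for each $b\ge1$ let $\tilde h_b(l,l')$, $1\le l,l'\le J$, be the quantities defined below. If $1\le j\ne j'\le J$ and $\liminf_{b\to\infty}\tilde\xi_b(j,j')>0$, then $\liminf_{b\to\infty}\tilde\tau_b(j,j')>0$.
   Context: For each $b$, there are probability distributions $\mathbf F_1,\dots,\mathbf F_J$ on $\mathbb R^d$ with a partition of the coordinates into clusters $C_1,\dots,C_b$ of sizes $d_1,\dots,d_b$; $\gamma,\phi:\mathbb R^+\to\mathbb R^+$ continuous increasing with $\gamma(0)=\phi(0)=0$. For independent $\mathbf U\sim\mathbf F_l$, $\mathbf V\sim\mathbf F_{l'}$ with sub-vectors $\mathbf U_i,\mathbf V_i$ on $C_i$, $\tilde h_b(l,l')=\phi\big[b^{-1}\sum_{i=1}^b\mathrm E\gamma(d_i^{-1}\|\mathbf U_i-\mathbf V_i\|^2)\big]$ (assumed finite); note $\tilde h_b(l,l')=\tilde h_b(l',l)$. $\tilde\xi_b(j,j')=\tilde h_b(j,j')-\frac12[\tilde h_b(j,j)+\tilde h_b(j',j')]$ and $\tilde\tau_b(j,j')=\sum_{1\le l\ne j'\le J}\frac{n_l}{n-1}|\tilde h_b(j',l)-\tilde h_b(j,l)|+\frac{n_{j'}-1}{n-1}|\tilde h_b(j',j')-\tilde h_b(j,j')|$. *)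

From HB Require Import structures.
From mathcomp Require Import all_boot all_order all_algebra.
From mathcomp Require Import all_classical all_reals all_analysis.
Set Implicit Arguments. Unset Strict Implicit. Unset Printing Implicit Defensive.
Import Order.TTheory GRing.Theory Num.Theory numFieldNormedType.Exports.
Local Open Scope ring_scope.

(* R^d is modelled as d.-tuple R with its product (Borel) sigma-algebra.
   A partition of the d coordinates into b clusters C_1..C_b is given by a
   cluster-assignment map  c : 'I_d -> 'I_b  (coordinate k lies in C_{c k}). *)

Section Defs.
Variable R : realType.

Definition csize (d b : nat) (c : 'I_d -> 'I_b) (i : 'I_b) : nat :=
  #|[set k : 'I_d | c k == i]|.

Definition cl_sqdist (d b : nat) (c : 'I_d -> 'I_b) (i : 'I_b)
  (u v : d.-tuple R) : R :=
  \sum_(k < d | c k == i) (tnth u k - tnth v k) ^+ 2.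

(* E gamma(d_i^{-1} ||U_i - V_i||^2) for independent U ~ P, V ~ Q, i.e. the
   integral against the product measure P \x Q. *)
Definition Egam (d b : nat) (c : 'I_d -> 'I_b) (gamma : R -> R)
  (P Q : probability (d.-tuple R) R) (i : 'I_b) : \bar R :=
  (\int[(P \x Q)%E]_uv (gamma (cl_sqdist c i uv.1 uv.2 / (csize c i)%:R))%:E)%E.

Definition htilde (d b : nat) (c : 'I_d -> 'I_b) (gamma phi : R -> R)
  (P Q : probability (d.-tuple R) R) : R :=
  phi (b%:R^-1 * \sum_(i < b) fine (Egam c gamma P Q i)).

Definition xitilde (J : nat) (h : 'I_J -> 'I_J -> R) (j j' : 'I_J) : R :=
  h j j' - 2^-1 * (h j j + h j' j').

Definition tautilde (J : nat) (n : 'I_J -> nat) (h : 'I_J -> 'I_J -> R)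
  (j j' : 'I_J) : R :=
  let N := (\sum_(l < J) n l)%N in
  \sum_(l < J | l != j') ((n l)%:R / (N%:R - 1)) * `|h j' l - h j l|
  + (((n j')%:R - 1) / (N%:R - 1)) * `|h j' j' - h j j'|.

End Defs.

From HB Require Import structures.
From mathcomp Require Import all_boot all_order all_algebra.
From mathcomp Require Import all_classical all_reals all_analysis.
From mathcomp Require Import measurable_realfun lra.
Import Order.TTheory GRing.Theory Num.Theory numFieldNormedType.Exports.
Local Open Scope classical_set_scope.
Local Open Scope ring_scope.

(* By Tonelli on the product measure, h(j,j') = h(j',j), hence
   2 xi(j,j') = (h(j,j') - h(j,j)) + (h(j',j) - h(j',j')).  Each bracket is
   bounded by a term |h(j',l) - h(j,l)| of tau with l = j resp. l = j', whose
   weight is at least 1/(n-1).  Hence tau >= 2 xi / (n-1) for every b, and a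
   positive lower bound on liminf xi transfers to liminf tau. *)

Section limn_einf_monotone.
Context {R : realType}.
Implicit Types u v : (\bar R)^nat.
Local Open Scope ereal_scope.

Lemma lee_limn_einf u v : (forall b, u b <= v b) -> limn_einf u <= limn_einf v.
Proof.
move=> uv; rewrite !limn_einf_lim.
apply: lee_lim; [exact: is_cvg_einfs | exact: is_cvg_einfs |].
apply: nearW => m; apply: le_ereal_inf_tmp => _ [k /= mk <-].
by apply: le_trans (uv k); apply: ereal_inf_lbound; exists k.
Qed.

Lemma limn_einfZ_le u (k : R) : (0 <= k)%R ->
  k%:E * limn_einf u <= limn_einf (fun b => k%:E * u b).
Proof.
move=> k0; rewrite !limn_einf_lim -limeMl //; last exact: is_cvg_einfs.
apply: lee_lim; [| exact: is_cvg_einfs |].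
  by apply: is_cvgeZl => //; exact: is_cvg_einfs.
apply: nearW => m; apply: le_ereal_inf_tmp => _ [b /= mb <-].
by apply: lee_wpmul2l; [rewrite lee_fin | apply: ereal_inf_lbound; exists b].
Qed.

End limn_einf_monotone.

Lemma ge0_integral_prod_swap d1 d2 (T1 : measurableType d1)
    (T2 : measurableType d2) (R : realType)
    (m1 : {sigma_finite_measure set T1 -> \bar R})
    (m2 : {sigma_finite_measure set T2 -> \bar R}) (f : T1 * T2 -> \bar R) :
  measurable_fun setT f -> (forall z, (0 <= f z)%E) ->
  (\int[m1 \x m2]_z f z = \int[m2 \x m1]_z f (z.2, z.1))%E.
Proof.
move=> mf f0.
have mfswap : measurable_fun setT (fun z : T2 * T1 => f (z.2, z.1)).
  exact: (measurableT_comp mf (@measurable_swap _ _ T2 T1)).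
by rewrite fubini_tonelli1 // (fubini_tonelli2 _ mfswap).
Qed.

Lemma measurable_fun_comp_ge0 d (T : measurableType d) (R : realType)
    (gamma : R -> R) (g : T -> R) :
  {within [set x : R | 0 <= x], continuous gamma} ->
  measurable_fun setT g -> (forall t, 0 <= g t) ->
  measurable_fun setT (gamma \o g).
Proof.
move=> gc mg g0.
have nonnegE : [set x : R | 0 <= x] = `[0, +oo[%classic.
  by apply/seteqP; split => x /=; rewrite in_itv /= andbT.
have mnonneg : measurable [set x : R | 0 <= x].
  by rewrite nonnegE; exact: measurable_itv.
apply: (measurable_comp mnonneg) mg; first by move=> _ [t _ <-]; exact: g0.
exact: subspace_continuous_measurable_fun.
Qed.

Section cluster_distance.
Context {R : realType} (d b : nat) (c : 'I_d -> 'I_b) (i : 'I_b).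

Lemma cl_sqdistC (u v : d.-tuple R) : cl_sqdist c i u v = cl_sqdist c i v u.
Proof. by apply: eq_bigr => k _; rewrite -sqrrN opprB. Qed.

Lemma cl_sqdist_ge0 (u v : d.-tuple R) : 0 <= cl_sqdist c i u v.
Proof. by apply: sumr_ge0 => k _; exact: sqr_ge0. Qed.

Lemma measurable_cl_sqdist :
  measurable_fun setT (fun uv : d.-tuple R * d.-tuple R =>
                         cl_sqdist c i uv.1 uv.2).
Proof.
rewrite /cl_sqdist; under eq_fun do rewrite big_mkcond /=.
apply: measurable_sum => k; case: (c k == i); last exact: measurable_cst.
apply/measurable_funX/measurable_funB.
- exact: measurableT_comp (measurable_tnth k) measurable_fst.
- exact: measurableT_comp (measurable_tnth k) measurable_snd.
Qed.

End cluster_distance.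

Section htilde_symmetry.
Context {R : realType} (d b : nat) (c : 'I_d -> 'I_b) (gamma phi : R -> R).
Hypothesis gamma_ge0 : forall x, 0 <= x -> 0 <= gamma x.
Hypothesis gamma_cont : {within [set x : R | 0 <= x], continuous gamma}.

Lemma EgamC (P Q : probability (d.-tuple R) R) i :
  Egam c gamma P Q i = Egam c gamma Q P i.
Proof.
have arg_ge0 (uv : d.-tuple R * d.-tuple R) :
    0 <= cl_sqdist c i uv.1 uv.2 / (csize c i)%:R.
  by apply: divr_ge0; [exact: cl_sqdist_ge0 | exact: ler0n].
rewrite /Egam ge0_integral_prod_swap.
- by apply: eq_integral => -[u v] _; rewrite /= cl_sqdistC.
- apply/measurable_EFinP/measurable_fun_comp_ge0 => //.
  by apply: measurable_funM => //; exact: measurable_cl_sqdist.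
- by move=> uv; rewrite lee_fin; exact/gamma_ge0/arg_ge0.
Qed.

Lemma htildeC (P Q : probability (d.-tuple R) R) :
  htilde c gamma phi P Q = htilde c gamma phi Q P.
Proof. by rewrite /htilde; under eq_bigr do rewrite EgamC. Qed.

End htilde_symmetry.

Lemma natr_sum_sub1_gt0 (R : numDomainType) J (n : 'I_J -> nat) (j : 'I_J) :
  (1 < n j)%N -> 0 < (\sum_(l < J) n l)%N%:R - 1 :> R.
Proof.
move=> nj; rewrite subr_gt0 ltr1n (leq_trans nj) //.
by rewrite (bigD1 j) //= leq_addr.
Qed.

Lemma xitilde_le_tautilde (R : realType) J (n : 'I_J -> nat)
    (h : 'I_J -> 'I_J -> R) (j j' : 'I_J) :
  j != j' -> (0 < n j)%N -> (1 < n j')%N -> h j' j = h j j' ->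
  2 / ((\sum_(l < J) n l)%N%:R - 1) * xitilde h j j' <= tautilde n h j j'.
Proof.
move=> jj' nj nj' hC; rewrite /tautilde /xitilde /=.
set N := (\sum_(l < J) n l)%N; rewrite (bigD1 j) //=.
have N_gt1 : 0 < N%:R - 1 :> R by exact: natr_sum_sub1_gt0 nj'.
set w := (N%:R - 1)^-1.
have w_gt0 : 0 < w by rewrite invr_gt0.
set S := \sum_(l < J | _) _.
have S_ge0 : 0 <= S.
  apply: sumr_ge0 => l _; rewrite mulr_ge0 //.
  by rewrite divr_ge0 // ltW.
have nj_ge1 : 1 <= (n j)%:R :> R by rewrite ler1n.
have nj'_ge1 : 1 <= (n j')%:R - 1 :> R.
  by move: nj'; rewrite -(ler_nat R); lra.
have bound_j : w * (h j j' - h j j) <= w * (n j)%:R * `|h j' j - h j j|.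
  rewrite -mulrA ler_pM2l // hC (le_trans (ler_norm _)) //.
  by rewrite ler_peMl.
have bound_j' :
    w * (h j j' - h j' j') <= w * ((n j')%:R - 1) * `|h j' j' - h j j'|.
  rewrite -mulrA ler_pM2l // -normrN opprB (le_trans (ler_norm _)) //.
  by rewrite ler_peMl.
rewrite /w in bound_j bound_j' S_ge0 *; lra.
Qed.

Theorem lemmaA1 (R : realType) (J : nat) (n : 'I_J -> nat)
  (gamma phi : R -> R)
  (d : nat -> nat) (c : forall b : nat, 'I_(d b) -> 'I_b)
  (F : forall b : nat, 'I_J -> probability ((d b).-tuple R) R)
  (j j' : 'I_J) :
  (2 <= J)%N ->
  (forall l, 2 <= n l)%N ->
  (* gamma, phi : R^+ -> R^+ continuous, increasing, vanishing at 0 *)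
  (forall x, 0 <= x -> 0 <= gamma x) ->
  (forall x, 0 <= x -> 0 <= phi x) ->
  {within [set x : R | 0 <= x], continuous gamma} ->
  {within [set x : R | 0 <= x], continuous phi} ->
  (forall x y, 0 <= x -> x < y -> gamma x < gamma y) ->
  (forall x y, 0 <= x -> x < y -> phi x < phi y) ->
  gamma 0 = 0 -> phi 0 = 0 ->
  (* clusters C_1..C_b are nonempty (d_i >= 1) *)
  (forall b (i : 'I_b), (0 < csize (c b) i)%N) ->
  (* the expectations are finite *)
  (forall b (l l' : 'I_J) (i : 'I_b),
      Egam (c b) gamma (F b l) (F b l') i \is a fin_num) ->
  j != j' ->
  (0 < limn_einf (fun b =>
     (xitilde (fun l l' => htilde (c b) gamma phi (F b l) (F b l')) j j')%:E))%E ->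
  (0 < limn_einf (fun b =>
     (tautilde n (fun l l' => htilde (c b) gamma phi (F b l) (F b l')) j j')%:E))%E.
Proof.
move=> _ n_ge2 gamma_ge0 _ gamma_cont _ _ _ _ _ _ _ jj' xi_gt0.
set xi := (fun b => _) in xi_gt0.
set k := 2 / ((\sum_(l < J) n l)%N%:R - 1) : R.
have k_gt0 : 0 < k.
  by rewrite divr_gt0 // (@natr_sum_sub1_gt0 _ _ _ j').
have kxi_gt0 : (0 < k%:E * limn_einf xi)%E by rewrite mule_gt0 // lte_fin.
apply: (lt_le_trans kxi_gt0); apply: (le_trans (limn_einfZ_le xi k (ltW k_gt0))).
apply: lee_limn_einf => b; rewrite -EFinM lee_fin.
apply: xitilde_le_tautilde jj' (ltnW (n_ge2 j)) (n_ge2 j') _.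
exact: htildeC.
Qed.
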